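(* Let $\lambda$ be an infinite cardinal with $\lambda^{\aleph_0}=\lambda$, and let $t_k:\lambda^+\to\lambda^+$ ($k<\omega$) be functions. Then there is a function $F:\lambda^+\to\lambda$ such that whenever $\alpha\neq\beta$ are ordinals below $\lambda^+$ with $F(\alpha)=F(\beta)$, there are no $i,j<\omega$ with $\alpha<t_i(\beta)<t_j(\alpha)$. *)

(* cardinals modelled by types and injections. *)
From Stdlib Require Import Relations Wellfounded.

Definition card_le (A B : Type) : Prop :=
  exists f : A -> B, forall x y, f x = f y -> x = y.

(* |A| = |B| (both inequalities; equivalent to a bijection by
   Cantor-Schroeder-Bernstein) *)
Definition card_eq (A B : Type) : Prop := card_le A B /\ card_le B A.

(* (K, lt) is a well-order of order type lambda^+, where lambda = |L|:
   a strict well-order all of whose proper initial segments have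
   cardinality <= |L|, while K itself has cardinality > |L|.
   (This is exactly the initial ordinal of the successor cardinal of |L|.) *)
Record is_succ_card_order (L K : Type) (lt : K -> K -> Prop) : Prop := {
  sco_wf : well_founded lt;
  sco_trans : forall x y z, lt x y -> lt y z -> lt x z;
  sco_total : forall x y, lt x y \/ x = y \/ lt y x;
  sco_seg_small : forall a : K, card_le {x : K | lt x a} L;
  sco_big : ~ card_le K L
}.

From Stdlib Require Import Classical ClassicalEpsilon FunctionalExtensionality.

(* Let D(y) be the least ordinal above y closed under all the t_k; it lies
   below lambda^+ because lambda^+ is regular, and every interval on which D is
   constant has size at most lambda, so it can be injected into lambda.  If
   alpha < t_i(beta) < t_j(alpha) then D(t_i(beta)) = D(alpha), and either
   D(alpha) = D(beta) or alpha < beta.  Hence it suffices to colour alpha by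
   its index inside its interval together with a second colour, chosen by
   well-founded recursion, that differs from the second colours of the earlier
   alpha' with the same index as alpha lying in the interval of some
   t_i(alpha): there is at most one such alpha' for each i, and lambda is
   uncountable since lambda^{aleph_0} = lambda. *)

Set Implicit Arguments.

Arguments sco_wf {L K lt}.
Arguments sco_trans {L K lt}.
Arguments sco_total {L K lt}.
Arguments sco_seg_small {L K lt}.
Arguments sco_big {L K lt}.

Lemma card_le_refl (A : Type) : card_le A A.
Proof. exists (fun x => x); auto. Qed.

Lemma card_le_trans (A B C : Type) : card_le A B -> card_le B C -> card_le A C.
Proof.
  intros [f f_inj] [g g_inj].
  exists (fun x => g (f x)); auto.
Qed.

Lemma card_le_prod_seq (A B L : Type) :
  card_le A L -> card_le B L -> card_le (A * B) (nat -> L).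
Proof.
  intros [f f_inj] [g g_inj].
  exists (fun p k => match k with 0 => f (fst p) | _ => g (snd p) end).
  intros [a b] [a' b'] E.
  rewrite (f_inj a a' (f_equal (fun s => s 0) E)), (g_inj b b' (f_equal (fun s => s 1) E)).
  reflexivity.
Qed.

Lemma card_le_option_prod (A L : Type) :
  card_le nat L -> card_le A L -> card_le (option A) (L * L).
Proof.
  intros [j j_inj] [f f_inj].
  exists (fun o => match o with None => (j 0, j 0) | Some a => (j 1, f a) end).
  intros [a|] [a'|] E; try reflexivity.
  - injection E as E. rewrite (f_inj _ _ E). reflexivity.
  - injection E as tag _. discriminate (j_inj _ _ tag).
  - injection E as tag _. discriminate (j_inj _ _ tag).
Qed.

Section PowerClosedCardinal.

Variable L : Type.
Hypothesis L_pow : card_le (nat -> L) L.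
Hypothesis L_nat : card_le nat L.

Lemma card_le_prod (A B : Type) : card_le A L -> card_le B L -> card_le (A * B) L.
Proof. intros HA HB. exact (card_le_trans (card_le_prod_seq HA HB) L_pow). Qed.

Lemma card_le_option (A : Type) : card_le A L -> card_le (option A) L.
Proof.
  intro HA. apply card_le_trans with (B := (L * L)%type).
  - exact (card_le_option_prod L_nat HA).
  - exact (card_le_prod (card_le_refl L) (card_le_refl L)).
Qed.

(* Cantor's diagonal argument, run inside L through the injection (nat -> L) -> L. *)
Lemma countable_not_cover (s : nat -> option L) : exists y, forall n, s n <> Some y.
Proof.
  destruct L_pow as [iota iota_inj], L_nat as [j j_inj].
  pose (h := fun n => epsilon (inhabits (fun _ : nat => j 0)) (fun g => s n = Some (iota g))).
  pose (f := fun n => if excluded_middle_informative (h n n = j 0) then j 1 else j 0).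
  exists (iota f). intros n E.
  assert (hn : h n = f).
  { apply iota_inj. enough (s n = Some (iota (h n))) by congruence.
    exact (epsilon_spec _ (fun g => s n = Some (iota g)) (ex_intro _ f E)). }
  assert (Hf : f n = if excluded_middle_informative (f n = j 0) then j 1 else j 0).
  { unfold f at 1. rewrite hn. reflexivity. }
  destruct (excluded_middle_informative (f n = j 0)) as [e|e].
  - rewrite e in Hf. discriminate (j_inj _ _ Hf).
  - exact (e Hf).
Qed.

End PowerClosedCardinal.

Lemma wf_minimal (K : Type) (lt : K -> K -> Prop) (wf : well_founded lt)
  (P : K -> Prop) (z : K) :
  P z -> exists m, P m /\ forall w, P w -> ~ lt w m.
Proof.
  induction (wf z) as [z _ IH]; intro Pz.
  destruct (classic (exists w, P w /\ lt w z)) as [[w [Pw hw]]|N].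
  - exact (IH w hw Pw).
  - exists z; split; auto. intros w Pw hw; apply N; eauto.
Qed.

Lemma wf_coloring (K L Y : Type) (lt : K -> K -> Prop) (wf : well_founded lt)
  (L_uncountable : forall s : nat -> option L, exists y, forall n, s n <> Some y)
  (key : K -> Y) (key_inj : forall a b, key a = key b -> a = b)
  (target : K -> nat -> Y) :
  exists q : K -> L, forall n a b, lt a b -> key a = target b n -> q a <> q b.
Proof.
  destruct (L_uncountable (fun _ => None)) as [y0 _].
  pose (avoid := fun s : nat -> option L =>
                   epsilon (inhabits y0) (fun y => forall n, s n <> Some y)).
  assert (avoidP : forall s n, s n <> Some (avoid s)).
  { intro s. exact (epsilon_spec _ (fun y => forall n, s n <> Some y) (L_uncountable s)). }
  pose (nbr := fun b n => epsilon (inhabits b) (fun a => key a = target b n)).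
  assert (nbrP : forall n a b, key a = target b n -> nbr b n = a).
  { intros n a b E. apply key_inj. rewrite E.
    exact (epsilon_spec _ (fun a => key a = target b n) (ex_intro _ a E)). }
  pose (step := fun b (rec : forall a, lt a b -> L) =>
          avoid (fun n => match excluded_middle_informative (lt (nbr b n) b) with
                          | left h => Some (rec _ h) | right _ => None end)).
  pose (q := Fix wf (fun _ => L) step).
  assert (q_eq : forall b, q b = step b (fun a _ => q a)).
  { intro b. refine (Fix_eq wf (fun _ => L) step _ b). intros x f g Hfg. unfold step. f_equal.
    apply functional_extensionality. intro n.
    destruct (excluded_middle_informative _); congruence. }
  exists q. intros n a b ab E Eq.
  apply (avoidP (fun n => match excluded_middle_informative (lt (nbr b n) b) with
                          | left h => Some (q (nbr b n)) | right _ => None end) n).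
  rewrite (nbrP n a b E).
  destruct (excluded_middle_informative (lt a b)) as [_|]; [|contradiction].
  rewrite Eq, q_eq. reflexivity.
Qed.

Section SuccessorCardinal.

Variables (L K : Type) (lt : K -> K -> Prop).
Hypothesis HK : is_succ_card_order L K lt.
Hypothesis L_pow : card_le (nat -> L) L.
Hypothesis L_nat : card_le nat L.

Lemma segment_code :
  exists E : K -> K -> L, forall d w w', lt w d -> lt w' d -> E d w = E d w' -> w = w'.
Proof.
  destruct (L_nat) as [j _].
  pose (e := fun d => proj1_sig (constructive_indefinite_description _ (sco_seg_small HK d))).
  assert (e_inj : forall d x y, e d x = e d y -> x = y).
  { intro d. exact (proj2_sig (constructive_indefinite_description _ (sco_seg_small HK d))). }
  exists (fun d w => match excluded_middle_informative (lt w d) with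
                     | left h => e d (exist _ w h) | right _ => j 0 end).
  intros d w w' h h' E.
  destruct (excluded_middle_informative (lt w d)); [|contradiction].
  destruct (excluded_middle_informative (lt w' d)); [|contradiction].
  exact (f_equal (@proj1_sig _ _) (e_inj _ _ _ E)).
Qed.

(* Regularity of lambda^+: otherwise z |-> (an i with z <= f i, position of z
   below f i) would inject K into I * option L. *)
Lemma small_family_bounded (I : Type) (f : I -> K) :
  card_le I L -> exists z, forall i, lt (f i) z.
Proof.
  intro HI. apply NNPP; intro unbounded. apply (sco_big HK).
  assert (escape : forall z, exists i, ~ lt (f i) z).
  { intro z. apply not_all_not_ex; intro N.
    apply unbounded. exists z. intro i. exact (NNPP _ (N i)). }
  pose (ch := fun z => proj1_sig (constructive_indefinite_description _ (escape z))).
  assert (le_ch : forall z, lt z (f (ch z)) \/ z = f (ch z)).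
  { intro z. destruct (sco_total HK z (f (ch z))) as [h|[h|h]]; auto. exfalso.
    exact (proj2_sig (constructive_indefinite_description _ (escape z)) h). }
  destruct segment_code as [E HE].
  apply card_le_trans with (B := (I * option L)%type).
  - exists (fun z => (ch z, if excluded_middle_informative (z = f (ch z)) then None
                              else Some (E (f (ch z)) z))).
    intros z z' H. injection H as Hch Hcode.
    destruct (excluded_middle_informative (z = f (ch z))) as [e|n];
      destruct (excluded_middle_informative (z' = f (ch z'))) as [e'|n'];
      try discriminate Hcode.
    + rewrite e, e', Hch. reflexivity.
    + injection Hcode as Hcode.
      destruct (le_ch z) as [lt_z|]; [|contradiction].
      destruct (le_ch z') as [lt_z'|]; [|contradiction].
      rewrite <- Hch in Hcode, lt_z'.
      exact (HE _ _ _ lt_z lt_z' Hcode).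
  - exact (card_le_prod L_pow HI (card_le_option L_pow L_nat (card_le_refl L))).
Qed.

Variable t : nat -> K -> K.

Definition closed (d : K) : Prop := forall n w, lt w d -> lt (t n w) d.

Lemma image_bound (g : K) :
  exists z, lt g z /\ forall n w, lt w g \/ w = g -> lt (t n w) z.
Proof.
  destruct (@small_family_bounded (option (nat * option {w | lt w g}))
     (fun o => match o with None => g | Some (n, None) => t n g
                       | Some (n, Some w) => t n (proj1_sig w) end)) as [z Hz].
  { apply (card_le_option L_pow L_nat), (card_le_prod L_pow L_nat),
          (card_le_option L_pow L_nat), (sco_seg_small HK g). }
  exists z. split; [exact (Hz None)|].
  intros n w [h| ->].
  - exact (Hz (Some (n, Some (exist _ w h)))).
  - exact (Hz (Some (n, None))).
Qed.

(* The supremum of the omega-chain y, next y, next (next y), ... *)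
Lemma closed_above (y : K) : exists d, lt y d /\ closed d.
Proof.
  pose (next := fun g => proj1_sig (constructive_indefinite_description _ (image_bound g))).
  assert (nextP : forall g n w, lt w g \/ w = g -> lt (t n w) (next g)).
  { intro g. exact (proj2 (proj2_sig (constructive_indefinite_description _ (image_bound g)))). }
  pose (chain := fun k => Nat.iter k next y).
  destruct (small_family_bounded chain L_nat) as [z Hz].
  destruct (wf_minimal (sco_wf HK) (fun d => forall k, lt (chain k) d) z Hz)
    as [m [Hm m_min]].
  exists m. split; [exact (Hm 0)|].
  intros n w hw.
  assert (reach : exists k, ~ lt (chain k) w).
  { apply not_all_not_ex; intro N. apply (m_min w); [|exact hw].
    intro k. exact (NNPP _ (N k)). }
  destruct reach as [k hk].
  apply (sco_trans HK) with (chain (S k)); [|exact (Hm (S k))].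
  apply nextP. destruct (sco_total HK (chain k) w) as [h|[h|h]]; auto; contradiction.
Qed.

Definition least_closed_above (y d : K) : Prop :=
  lt y d /\ closed d /\ forall d', lt y d' -> closed d' -> ~ lt d' d.

Lemma exists_least_closed_above (y : K) : exists d, least_closed_above y d.
Proof.
  destruct (closed_above y) as [z Hz].
  destruct (wf_minimal (sco_wf HK) (fun d => lt y d /\ closed d) z Hz)
    as [m [[y_m m_closed] m_min]].
  exists m. split; [exact y_m|split; [exact m_closed|]].
  intros d' yd' cd'. exact (m_min d' (conj yd' cd')).
Qed.

Definition closure_point (y : K) : K := epsilon (inhabits y) (least_closed_above y).

Lemma closure_pointP (y : K) : least_closed_above y (closure_point y).
Proof. exact (epsilon_spec _ _ (exists_least_closed_above y)). Qed.

Lemma lt_closure_point (y : K) : lt y (closure_point y).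
Proof. exact (proj1 (closure_pointP y)). Qed.

Lemma lt_t_closure_point (n : nat) (y : K) : lt (t n y) (closure_point y).
Proof. destruct (closure_pointP y) as [y_lt [y_closed _]]. exact (y_closed n y y_lt). Qed.

Lemma closure_point_eq (y z : K) :
  lt y z \/ y = z -> lt z (closure_point y) -> closure_point z = closure_point y.
Proof.
  intros yz z_lt.
  destruct (closure_pointP y) as [_ [y_closed y_min]].
  destruct (closure_pointP z) as [z_lt' [z_closed z_min]].
  assert (y_lt : lt y (closure_point z)).
  { destruct yz as [h| <-]; [exact (sco_trans HK _ _ _ h z_lt')|exact z_lt']. }
  destruct (sco_total HK (closure_point z) (closure_point y)) as [h|[h|h]]; auto;
    exfalso; [exact (y_min _ y_lt z_closed h)|exact (z_min _ z_lt y_closed h)].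
Qed.

Lemma block_index_exists :
  exists p : K -> L, forall a b,
    (closure_point a, p a) = (closure_point b, p b) -> a = b.
Proof.
  destruct segment_code as [E HE].
  exists (fun y => E (closure_point y) y).
  intros a b H. injection H as hD hp. rewrite hD in hp.
  apply (HE (closure_point b)); auto.
  rewrite <- hD. apply lt_closure_point.
  apply lt_closure_point.
Qed.

Lemma interleaved_block (a b : K) (i k : nat) :
  lt a (t i b) -> lt (t i b) (t k a) -> closure_point (t i b) = closure_point a.
Proof.
  intros h1 h2. apply closure_point_eq; [left; exact h1|].
  exact (sco_trans HK _ _ _ h2 (lt_t_closure_point k a)).
Qed.

Lemma interleaved_order (a b : K) (i : nat) :
  lt b a -> lt a (t i b) -> closure_point a = closure_point b.
Proof.
  intros ba h. apply closure_point_eq; [left; exact ba|].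
  exact (sco_trans HK _ _ _ h (lt_t_closure_point i b)).
Qed.

End SuccessorCardinal.

Theorem lemma1 (L K : Type) (lt : K -> K -> Prop)
  (L_infinite : card_le nat L)
  (L_pow : card_eq (nat -> L) L)
  (HK : is_succ_card_order L K lt)
  (t : nat -> K -> K) :
  exists F : K -> L,
    forall a b : K, a <> b -> F a = F b ->
      ~ (exists i j : nat, lt a (t i b) /\ lt (t i b) (t j a)).
Proof.
  destruct L_pow as [L_pow _].
  destruct (block_index_exists HK L_pow L_infinite t) as [p key_inj].
  destruct (wf_coloring (sco_wf HK) (countable_not_cover L_pow L_infinite)
              (fun y => (closure_point lt t y, p y)) key_inj
              (fun b n => (closure_point lt t (t n b), p b))) as [q q_ok].
  destruct (card_le_prod L_pow (card_le_refl L) (card_le_refl L)) as [g g_inj].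
  exists (fun a => g (p a, q a)).
  intros a b ab_neq hF [i [k [h1 h2]]].
  injection (g_inj _ _ hF) as hp hq.
  destruct (sco_total HK a b) as [ab|[ab|ba]].
  - apply (q_ok i a b ab); [|exact hq].
    rewrite (interleaved_block HK L_pow L_infinite t _ _ _ _ h1 h2), hp. reflexivity.
  - exact (ab_neq ab).
  - apply ab_neq, key_inj.
    rewrite (interleaved_order HK L_pow L_infinite t _ _ _ ba h1), hp. reflexivity.
Qed.
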